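(* Let $G$ be a finitely generated group hyperbolic relative to a finite collection $\mathcal P=\{P_\lambda\}_{\lambda\in\Lambda}$, $S$ a finite generating set, and $n\ge1$. Then the $G$-action on the $n$-Rips complex $\Gamma_n^\blacktriangle$ is cocompact, i.e. there are finitely many $G$-orbits of simplices.
   Context: Let $\Gamma$ be the Cayley graph of $G$ with respect to $S$, $V=G$, $W$ the set of cosets $gP_\lambda$. Relative hyperbolicity means the coned-off Cayley graph (vertex set $V\cup W$, edges of $\Gamma$ plus an edge $(v,w)$ whenever $v\in w$) is fine (for every edge $e$ and integer $m$, finitely many circuits of length $\le m$ contain $e$) and $\delta$-hyperbolic. Extend $|\cdot,\cdot|_S$ to $V\cup W$ via distances in $\Gamma$ between the corresponding elements/cosets. $\Gamma_n$ has vertex set $V\cup W$ and an edge between $u\ne u'$ whenever $|u,u'|_S\le n$; $\Gamma_n^\blacktriangle$ is obtained by spanning simplices on all cliques of $\Gamma_n$. *)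

From mathcomp Require Import all_boot.
From Stdlib Require List.

Set Implicit Arguments.
Unset Strict Implicit.
Unset Printing Implicit Defensive.

Section RelHyp.

Context {G : Type} (mul : G -> G -> G) (one : G) (inv : G -> G).

Record is_group : Prop := IsGroup {
  mulA : forall x y z, mul x (mul y z) = mul (mul x y) z;
  mul1g : forall x, mul one x = x;
  mulg1 : forall x, mul x one = x;
  mulVg : forall x, mul (inv x) x = one;
  mulgV : forall x, mul x (inv x) = one }.

Definition is_subgroup (H : G -> Prop) : Prop :=
  H one /\ (forall x y, H x -> H y -> H (mul x y)) /\ (forall x, H x -> H (inv x)).

Definition word_prod (l : seq G) : G := foldr mul one l.
Definition is_S_word (S : seq G) (l : seq G) : Prop :=
  forall x, List.In x l -> List.In x S \/ List.In (inv x) S.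

Definition generates (S : seq G) : Prop :=
  forall g, exists l, is_S_word S l /\ g = word_prod l.

Definition Sdist_le (S : seq G) (n : nat) (a b : G) : Prop :=
  exists l, is_S_word S l /\ (size l <= n)%N /\ b = mul a (word_prod l).

Definition lcoset (g : G) (H : G -> Prop) : G -> Prop := fun x => H (mul (inv g) x).

Context {Lam : finType} (P : Lam -> G -> Prop).

(* Vertices: V = G (left) and W = cosets g P_lam (right, tagged with lam). *)
Definition Vertex := (G + (Lam * (G -> Prop)))%type.

Definition is_vertex (v : Vertex) : Prop :=
  match v with
  | inl _ => True
  | inr (lam, A) => exists g, A = lcoset g (P lam)
  end.

Definition carrier (v : Vertex) : G -> Prop :=
  match v with
  | inl g => fun x => x = g
  | inr (_, A) => A
  end.

Definition coned_adj (S : seq G) (u v : Vertex) : Prop :=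
  is_vertex u /\ is_vertex v /\
  match u, v with
  | inl g, inl h => g <> h /\ exists s, List.In s S /\ (h = mul g s \/ g = mul h s)
  | inl g, inr (_, A) => A g
  | inr (_, A), inl g => A g
  | _, _ => False
  end.

Definition rips_adj (S : seq G) (n : nat) (u v : Vertex) : Prop :=
  is_vertex u /\ is_vertex v /\ u <> v /\
  exists a b, carrier u a /\ carrier v b /\ Sdist_le S n a b.

Definition is_simplex (S : seq G) (n : nat) (sigma : Vertex -> Prop) : Prop :=
  (exists l : seq Vertex, forall x, sigma x <-> List.In x l) /\
  (exists x, sigma x) /\
  (forall u, sigma u -> is_vertex u) /\
  (forall u v, sigma u -> sigma v -> u <> v -> rips_adj S n u v).

Definition act (g : G) (v : Vertex) : Vertex :=
  match v with
  | inl h => inl (mul g h)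
  | inr (lam, A) => inr (lam, fun x => A (mul (inv g) x))
  end.

Definition act_set (g : G) (sigma : Vertex -> Prop) : Vertex -> Prop :=
  fun v => exists w, sigma w /\ v = act g w.

End RelHyp.

Section Graphs.
Context {T : Type} (adj : T -> T -> Prop).

Definition cyc_edges (c : seq T) : seq (T * T) := zip c (rot 1 c).

Definition is_circuit (c : seq T) : Prop :=
  (3 <= size c)%N /\ List.NoDup c /\ List.Forall (fun p => adj p.1 p.2) (cyc_edges c).

Definition edge_in_circuit (u v : T) (c : seq T) : Prop :=
  List.In (u, v) (cyc_edges c) \/ List.In (v, u) (cyc_edges c).

Definition fine : Prop :=
  forall u v, adj u v -> forall m : nat,
    exists L : seq (seq T), forall c, is_circuit c -> (size c <= m)%N ->
      edge_in_circuit u v c -> List.In c L.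

Definition is_walk (u v : T) (p : seq T) : Prop :=
  List.Forall (fun e => adj e.1 e.2) (zip (u :: p) p) /\ last u p = v.

Definition gdist (u v : T) (k : nat) : Prop :=
  (exists p, is_walk u v p /\ size p = k) /\ (forall p, is_walk u v p -> (k <= size p)%N).

Definition hyperbolic (delta : nat) : Prop :=
  forall x y z w dxy dzw dxz dyw dxw dyz,
    gdist x y dxy -> gdist z w dzw -> gdist x z dxz -> gdist y w dyw ->
    gdist x w dxw -> gdist y z dyz ->
    (dxy + dzw <= maxn (dxz + dyw) (dxw + dyz) + 2 * delta)%N.

End Graphs.

Definition rel_hyperbolic {G : Type} (mul : G -> G -> G) (inv : G -> G)
  {Lam : finType} (P : Lam -> G -> Prop) (S : seq G) : Prop :=
  fine (coned_adj mul inv P S) /\ exists delta, hyperbolic (coned_adj mul inv P S) delta.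

From Pilot Require Import Defs.
From mathcomp Require Import all_boot.
From Stdlib Require List.
From Stdlib Require Import Classical FunctionalExtensionality PropExtensionality Lia.
From mathcomp Require Import zify.

Set Implicit Arguments.
Unset Strict Implicit.
Unset Printing Implicit Defensive.

(* A simplex containing a
   group vertex [a] is moved by [a^-1] into the [n]-ball around [1].  Otherwise
   all its vertices are cosets; fix one, [b1], and a point [a ∈ b1] that is
   [n]-close to another vertex [b2].  For any vertex [v ≠ b1], some [c1 ∈ v] is
   [n]-close to some [p1 ∈ b1], and [a -> b2 -> v -> c1 -> p1] is a walk of
   length at most [3n+4] avoiding [b1].  Closed through [b1] and translated by
   [a^-1], it contains a circuit of length at most [3n+6] through the edge
   [(P_λ, 1)] and the vertex [a^-1 p1].  Fineness leaves finitely many such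
   circuits, so [a^-1 c1] ranges over a finite set, and every simplex is a
   translate of a subset of one finite set of vertices. *)

Section Walks.
Context {T : Type} (adj : T -> T -> Prop).

Fixpoint walk (x : T) (p : seq T) : Prop :=
  if p is y :: q then adj x y /\ walk y q else True.

Definition reach_in (Q : T -> Prop) (x y : T) (k : nat) : Prop :=
  exists p, walk x p /\ last x p = y /\ (size p <= k)%N /\ List.Forall Q (x :: p).

Lemma walk_cat x p1 p2 : walk x p1 -> walk (last x p1) p2 -> walk x (p1 ++ p2).
Proof. by elim: p1 x => [|y q IH] x //= [axy wq] w2; split => //; apply: IH. Qed.

Lemma walk_suffix x p1 y p2 :
  walk x (p1 ++ y :: p2) -> walk y p2 /\ last x (p1 ++ y :: p2) = last y p2.
Proof. by elim: p1 x => [|z q IH] x /= [_ w]; last apply: IH. Qed.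

Lemma reach_in_refl Q x k : Q x -> reach_in Q x x k.
Proof. by move=> Qx; exists [::]; do 3 split => //; constructor; [|constructor]. Qed.

Lemma reach_in_edge Q x y : Q x -> Q y -> adj x y -> reach_in Q x y 1.
Proof. by move=> Qx Qy axy; exists [:: y]; do 3 split => //; do 2 (constructor => //). Qed.

Lemma reach_in_trans Q x y z k l :
  reach_in Q x y k -> reach_in Q y z l -> reach_in Q x z (k + l).
Proof.
move=> [p1 [w1 [e1 [s1 f1]]]] [p2 [w2 [e2 [s2 f2]]]].
exists (p1 ++ p2); split; first by apply: walk_cat; rewrite ?e1.
split; first by rewrite last_cat e1.
split; first by rewrite size_cat leq_add.
change (List.Forall Q ((x :: p1) ++ p2)%list); apply/List.Forall_app; split => //.
by move: f2 => /List.Forall_cons_iff [].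
Qed.

Lemma reach_in_mono Q x y k l : (k <= l)%N -> reach_in Q x y k -> reach_in Q x y l.
Proof. by move=> kl [p [w [e [s f]]]]; exists p; do 3 split => //; apply: leq_trans kl. Qed.

Lemma walk_loop_erase Q x p : walk x p -> List.Forall Q (x :: p) ->
  exists p', walk x p' /\ last x p' = last x p /\ (size p' <= size p)%N /\
    List.Forall Q (x :: p') /\ List.NoDup (x :: p').
Proof.
elim: p x => [|z q IH] x.
  by move=> _ f; exists [::]; do 4 split => //; constructor; [|constructor].
move=> /= [axz wq] /List.Forall_cons_iff [Qx fq].
have [p0 [w0 [e0 [s0 [f0 n0]]]]] := IH z wq fq.
case: (classic (List.In x (z :: p0))) => [xin|xn]; last first.
  by exists (z :: p0); do 4 split => //; constructor.
have [l1 [l2 e]] := List.in_split _ _ xin.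
have [wl2 el2] : walk x l2 /\ last z p0 = last x l2.
  by move: e w0; case: l1 => [|y l1] /= [-> ->] //; apply: walk_suffix.
have hs : size (z :: p0) = (size l1 + (size l2).+1)%N by rewrite e size_cat.
rewrite e in f0 n0.
exists l2; split => //; split; first by rewrite -el2.
split; first by move: hs s0 => /= hs s0; lia.
split; first by move: f0 => /List.Forall_app [].
exact: List.NoDup_app_remove_l n0.
Qed.

Lemma in_last (x : T) p : List.In (last x p) (x :: p).
Proof. by elim: p x => [|y q IH] x /=; [left | right; apply: IH]. Qed.

Lemma walk_rcons_edges x q w : walk x q -> adj (last x q) w ->
  List.Forall (fun e => adj e.1 e.2) (zip (x :: q) (rcons q w)).
Proof.
elim: q x => [|y q IH] x /=; first by move=> _ h; constructor.
by move=> [axy wq] h; constructor => //; apply: IH.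
Qed.

Lemma circuit_of_walk w x y p :
  adj w x -> adj y w -> walk x p -> last x p = y ->
  List.Forall (fun v => v <> w) (x :: p) -> x <> y ->
  exists c, is_circuit adj c /\ (size c <= size p + 2)%N /\
    edge_in_circuit w x c /\ List.In y c.
Proof.
move=> awx ayw wp ep fp nxy.
have [p' [w' [e' [s' [f' n']]]]] := walk_loop_erase wp fp.
exists [:: w, x & p']; split; [split; [|split] | split; [|split]].
- by case: p' {w' s' f' n'} e' => [|? ?] //= e'; move: nxy; rewrite -ep -e'.
- constructor => //; move: f' => /List.Forall_forall f' /f'; exact.
- rewrite /cyc_edges rot1_cons /=; constructor => //.
  by apply: walk_rcons_edges; rewrite ?e' ?ep.
- by rewrite /= addn2; move: s'; lia.
- by left; rewrite /cyc_edges rot1_cons /=; left.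
- by right; rewrite -ep -e'; apply: in_last.
Qed.

End Walks.

Lemma In_enum (I : finType) (i : I) : List.In i (enum I).
Proof.
have : i \in enum I by rewrite mem_enum.
by elim: (enum I) => [|j s IH] //; rewrite in_cons => /orP [/eqP ->|/IH]; [left | right].
Qed.

Lemma fin_cover_union (I : finType) (A : Type) (Q : I -> A -> Prop) :
  (forall i, exists L : seq A, forall x, Q i x -> List.In x L) ->
  exists L : seq A, forall i x, Q i x -> List.In x L.
Proof.
move=> hQ.
suff [L hL] : exists L : seq A, forall i, List.In i (enum I) -> forall x, Q i x -> List.In x L.
  by exists L => i; apply/hL/In_enum.
elim: (enum I) => [|i s [L IH]]; first by exists [::] => ? [].
have [Li hLi] := hQ i.
exists (Li ++ L)%list => j /= [<-|js] x hx; apply: List.in_or_app.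
  by left; apply: hLi.
by right; apply: IH js _ _.
Qed.

Fixpoint sublists {A : Type} (s : seq A) : seq (seq A) :=
  if s is a :: s' then (sublists s' ++ List.map (cons a) (sublists s'))%list
  else [:: [::]].

Lemma sublists_represent {A : Type} (s : seq A) (tau : A -> Prop) :
  (forall v, tau v -> List.In v s) ->
  exists l, List.In l (sublists s) /\ forall v, tau v <-> List.In v l.
Proof.
elim: s tau => [|a s IH] tau h.
  by exists [::]; split; [left | move=> v; split => // /h].
have [l [hl hi]] : exists l, List.In l (sublists s) /\ forall v, tau v /\ v <> a <-> List.In v l.
  by apply: IH => v [/h [e|//] nva]; subst.
have hv v : v <> a -> tau v <-> List.In v l.
  by move=> nva; split => [tv | /hi []//]; apply/hi.
case: (classic (tau a)) => ta.
  exists (a :: l); split; first by apply/List.in_or_app; right; apply: List.in_map.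
  move=> v; case: (classic (v = a)) => [->|nva]; first by split => // _; left.
  by split => [tv | [e | hvl]]; [right; apply/hv | case: nva | apply/hv].
exists l; split; first by apply/List.in_or_app; left.
move=> v; case: (classic (v = a)) => [->|/hv //].
by split => [/ta [] | /hi []].
Qed.

Section Group.
Context {G : Type} (mul : G -> G -> G) (one : G) (inv : G -> G)
  (HG : is_group mul one inv).

Let mulA := Defs.mulA HG.
Let mul1g := Defs.mul1g HG.
Let mulg1 := Defs.mulg1 HG.
Let mulVg := Defs.mulVg HG.
Let mulgV := Defs.mulgV HG.

Lemma mulKg x y : mul (inv x) (mul x y) = y.
Proof. by rewrite mulA mulVg mul1g. Qed.

Lemma invK x : inv (inv x) = x.
Proof. by rewrite -[RHS](mulKg (inv x)) mulVg mulg1. Qed.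

Lemma mulKVg x y : mul x (mul (inv x) y) = y.
Proof. by rewrite -{1}(invK x) mulKg. Qed.

Lemma mulg_inj x y z : mul x y = mul x z -> y = z.
Proof. by move=> h; rewrite -(mulKg x y) h mulKg. Qed.

Lemma invM x y : inv (mul x y) = mul (inv y) (inv x).
Proof.
by apply: (@mulg_inj (mul x y)); rewrite mulgV -mulA (mulA y) mulgV mul1g mulgV.
Qed.

Lemma inv1 : inv one = one.
Proof. by rewrite -[LHS]mulg1 mulVg. Qed.

Lemma subgroup_mulr H p x : is_subgroup mul one inv H -> H p -> H (mul p x) <-> H x.
Proof.
move=> [_ [hM hI]] hp; split => [|hx]; last exact: hM.
by move=> h; rewrite -(mulKg p x); apply: hM => //; apply: hI.
Qed.

Section ConedGraph.
Context {Lam : finType} (P : Lam -> G -> Prop)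
  (HP : forall lam, is_subgroup mul one inv (P lam)) (S : seq G).

Notation Vx := (@Vertex G Lam).
Notation act := (@Defs.act G mul inv Lam).
Notation adj := (coned_adj mul inv P S).
Notation vertex := (is_vertex mul inv P).

Lemma act_lcoset g lam c :
  act g (inr (lam, lcoset mul inv c (P lam))) = inr (lam, lcoset mul inv (mul g c) (P lam)).
Proof.
congr (inr (_, _)); apply: functional_extensionality => x.
by rewrite /lcoset invM mulA.
Qed.

Lemma coset_vertexE lam A c : vertex (inr (lam, A)) -> A c -> A = lcoset mul inv c (P lam).
Proof.
move=> [h ->] hc; rewrite /lcoset in hc *; apply: functional_extensionality => x.
apply: propositional_extensionality.
have -> : mul (inv h) x = mul (mul (inv h) c) (mul (inv c) x) by rewrite -mulA mulKVg.
exact: subgroup_mulr.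
Qed.

Lemma lcoset_self lam c : lcoset mul inv c (P lam) c.
Proof. by rewrite /lcoset mulVg; case: (HP lam). Qed.

Lemma actK g v : act (inv g) (act g v) = v.
Proof.
case: v => [h|[lam A]] /=; first by rewrite mulKg.
by congr (inr (_, _)); apply: functional_extensionality => x; rewrite invK mulKg.
Qed.

Lemma actKV g v : act g (act (inv g) v) = v.
Proof. by rewrite -{1}(invK g) actK. Qed.

Lemma act_vertex g v : vertex v -> vertex (act g v).
Proof.
case: v => [h|[lam A]] //= [h ->]; exists (mul g h).
by apply: functional_extensionality => x; rewrite /lcoset invM mulA.
Qed.

Lemma act_adj g u v : adj u v -> adj (act g u) (act g v).
Proof.
move=> [hu [hv a]]; do 2 (split; first exact: act_vertex).
move: a; case: u {hu} => [x|[l1 A]]; case: v {hv} => [y|[l2 B]] //=; rewrite ?mulKg //.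
move=> [nxy [s [hs e]]]; split; first by move/mulg_inj.
by exists s; split => //; case: e => ->; [left | right]; rewrite mulA.
Qed.

Lemma reach_in_act g (Q Q' : Vx -> Prop) x y k :
  (forall z, Q z -> Q' (act g z)) ->
  reach_in adj Q x y k -> reach_in adj Q' (act g x) (act g y) k.
Proof.
move=> hQ [p [w [e [s f]]]]; exists (map (act g) p).
split.
  by elim: p x w {e f s} => [|z q IH] x //= [a b]; split; [apply: act_adj | apply: IH].
split; first by rewrite last_map e.
split; first by rewrite size_map.
elim: p x f {w e s} => [|z q IH] x /List.Forall_cons_iff [Qx fq] /=; by constructor; auto.
Qed.

Lemma reach_in_cone_in Q lam A x : vertex (inr (lam, A)) -> A x ->
  Q (inl x) -> Q (inr (lam, A)) -> reach_in adj Q (inl x) (inr (lam, A)) 1.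
Proof. by move=> hv hx Qx QA; apply: reach_in_edge. Qed.

Lemma reach_in_cone_out Q lam A x : vertex (inr (lam, A)) -> A x ->
  Q (inl x) -> Q (inr (lam, A)) -> reach_in adj Q (inr (lam, A)) (inl x) 1.
Proof. by move=> hv hx Qx QA; apply: reach_in_edge. Qed.

Lemma reach_in_letter (Q : Vx -> Prop) a x : (forall g, Q (inl g)) ->
  List.In x S \/ List.In (inv x) S ->
  reach_in adj Q (inl a) (inl (mul a x)) 1 /\ reach_in adj Q (inl (mul a x)) (inl a) 1.
Proof.
move=> hQ hx; case: (classic (mul a x = a)) => [->|nax]; first by split; apply: reach_in_refl.
have [s [hs e]] : exists s, List.In s S /\ (mul a x = mul a s \/ a = mul (mul a x) s).
  case: hx => hx; first by exists x; split => //; left.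
  by exists (inv x); split => //; right; rewrite -mulA mulgV mulg1.
split; apply: reach_in_edge => //; do 2 split => //.
- by split; [move=> e'; apply: nax | exists s].
- by split => //; exists s; split => //; case: e; [right | left].
Qed.

Lemma reach_in_word (Q : Vx -> Prop) l a : (forall g, Q (inl g)) -> is_S_word inv S l ->
  reach_in adj Q (inl a) (inl (mul a (word_prod mul one l))) (size l) /\
  reach_in adj Q (inl (mul a (word_prod mul one l))) (inl a) (size l).
Proof.
move=> hQ; elim: l a => [|x l IH] a hw /=; first by rewrite mulg1; split; apply: reach_in_refl.
have [r1 r1'] := reach_in_letter a hQ (hw x (or_introl erefl)).
have [r2 r2'] := IH (mul a x) (fun y hy => hw y (or_intror hy)).
rewrite mulA; split; first by rewrite -add1n; apply: reach_in_trans r1 r2.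
by rewrite -addn1; apply: reach_in_trans r2' r1'.
Qed.

Lemma reach_in_sdist (Q : Vx -> Prop) n a b : (forall g, Q (inl g)) ->
  Sdist_le mul one inv S n a b ->
  reach_in adj Q (inl a) (inl b) n /\ reach_in adj Q (inl b) (inl a) n.
Proof.
move=> hQ [l [hw [hs ->]]].
by have [r r'] := reach_in_word a hQ hw; split; apply: reach_in_mono hs _.
Qed.

Definition base_coset lam : Vx := inr (lam, lcoset mul inv one (P lam)).

Lemma adj_base_one lam : adj (base_coset lam) (inl one).
Proof. by split; [exists one | split => //; apply: lcoset_self]. Qed.

Lemma adj_base_in lam x : P lam x -> adj (inl x) (base_coset lam).
Proof. by split => //; split; [exists one | rewrite /= /lcoset inv1 // mul1g]. Qed.

Definition group_points (v : Vx) : seq G := if v is inl g then [:: g] else [::].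

Section ShortCircuits.
Variable m : nat.
Variable circuits : seq (seq Vx).
Hypothesis circuitsP : forall lam c, is_circuit adj c -> (size c <= m.+2)%N ->
  edge_in_circuit (base_coset lam) (inl one) c -> List.In c circuits.

Definition circuit_points : seq G :=
  one :: List.flat_map (List.flat_map group_points) circuits.

(* Translating by [a^-1] turns the coset into [P_λ] and the walk into one from
   [1]; closing it through the two cone edges gives a circuit through [(P_λ, 1)]. *)
Lemma coset_return_point lam A a p1 : vertex (inr (lam, A)) -> A a -> A p1 ->
  reach_in adj (fun z => z <> inr (lam, A)) (inl a) (inl p1) m ->
  List.In (mul (inv a) p1) circuit_points.
Proof.
move=> hv ha hp1 r.
case: (classic (mul (inv a) p1 = one)) => [->|neq]; first by left.
right.
have eA := coset_vertexE hv ha.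
have hbase : act (inv a) (inr (lam, A)) = base_coset lam by rewrite eA act_lcoset mulVg.
have [p [wp [ep [sp fp]]]] :
    reach_in adj (fun z => z <> base_coset lam) (inl one) (inl (mul (inv a) p1)) m.
  rewrite -(mulVg a); apply: reach_in_act r => z hz e; apply: hz.
  by rewrite -(actKV a z) e -hbase actKV.
have hP1 : P lam (mul (inv a) p1) by move: hp1; rewrite eA.
have [c [hc [sc [ec inc]]]] := circuit_of_walk (adj_base_one lam) (adj_base_in hP1) wp ep fp
  (fun e => neq (esym (inl_inj e))).
apply/List.in_flat_map; exists c; split.
  by apply: circuitsP hc _ ec; apply: leq_trans sc _; rewrite addn2 ltnS.
by apply/List.in_flat_map; exists (inl (mul (inv a) p1)); split => //; left.
Qed.

End ShortCircuits.

Lemma fine_base_circuits : fine adj -> forall m, exists circuits : seq (seq Vx),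
  forall lam c, is_circuit adj c -> (size c <= m)%N ->
    edge_in_circuit (base_coset lam) (inl one) c -> List.In c circuits.
Proof.
move=> hfine m.
have [L hL] : exists L, forall lam c, [/\ is_circuit adj c, (size c <= m)%N &
    edge_in_circuit (base_coset lam) (inl one) c] -> List.In c L.
  apply: fin_cover_union => lam.
  have [L hL] := hfine _ _ (adj_base_one lam) m.
  by exists L => c [hc hs he]; apply: hL.
by exists L => lam c hc hs he; apply: (hL lam).
Qed.

Section Simplices.
Variable n : nat.
Variable circuits : seq (seq Vx).
Hypothesis circuitsP : forall lam c, is_circuit adj c -> (size c <= (3 * n + 4).+2)%N ->
  edge_in_circuit (base_coset lam) (inl one) c -> List.In c circuits.

Definition letters : seq G := S ++ map inv S.

Fixpoint words (k : nat) : seq (seq G) :=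
  if k is k'.+1 then [::] :: List.flat_map (fun x => List.map (cons x) (words k')) letters
  else [:: [::]].

Definition ball : seq G := List.map (word_prod mul one) (words n).

Lemma ball_word l : is_S_word inv S l -> (size l <= n)%N -> List.In (word_prod mul one l) ball.
Proof.
move=> hw hs; apply: List.in_map.
elim: n l hw hs => [|k IH] [|x l] hw //= hs; [by left | by left |].
right; apply/List.in_flat_map; exists x; split; last first.
  by apply/List.in_map/IH => // y hy; apply: hw; right.
apply: List.in_or_app; case: (hw x (or_introl erefl)) => hx; [left | right] => //.
by rewrite -(invK x); apply: List.in_map.
Qed.

Lemma sdist_ball a b : Sdist_le mul one inv S n a b -> exists u, List.In u ball /\ b = mul a u.
Proof. by move=> [l [hw [hs ->]]]; exists (word_prod mul one l); split => //; apply: ball_word. Qed.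

Definition core : seq G :=
  List.flat_map (fun x => List.map (mul x) ball) (circuit_points circuits).

Lemma core_mul x u : List.In x (circuit_points circuits) -> List.In u ball ->
  List.In (mul x u) core.
Proof. by move=> hx hu; apply/List.in_flat_map; exists x; split => //; apply: List.in_map. Qed.

Lemma core_ball u : List.In u ball -> List.In u core.
Proof. by move=> hu; rewrite -[u]mul1g; apply: core_mul => //; left. Qed.

Lemma core_one : List.In one core.
Proof. by apply/core_ball/(ball_word (l := [::])). Qed.

Definition anchored (g : G) (sigma : Vx -> Prop) : Prop :=
  forall v, sigma v -> exists c, carrier v c /\ List.In (mul (inv g) c) core.

Lemma group_simplex_anchored sigma a :
  is_simplex mul one inv P S n sigma -> sigma (inl a) -> anchored a sigma.
Proof.
move=> [_ [_ [_ hadj]]] ha v hv; case: (classic (v = inl a)) => [->|nv].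
  by exists a; split => //; rewrite mulVg; apply: core_one.
have [_ [_ [_ [a' [b [/= ea [hb hab]]]]]]] := hadj _ _ ha hv (nesym nv).
have [u [hu eb]] := sdist_ball hab.
by exists b; split => //; rewrite eb ea mulKg; apply: core_ball.
Qed.

Section CosetSimplex.
Variable sigma : Vx -> Prop.
Hypothesis simplex : is_simplex mul one inv P S n sigma.
Hypothesis no_group_vertex : forall x, ~ sigma (inl x).
Variables (lam : Lam) (A : G -> Prop).
Hypothesis sigma_b1 : sigma (inr (lam, A)).

Let sigma_vertex : forall v, sigma v -> vertex v := simplex.2.2.1.
Let sigma_adj : forall u v, sigma u -> sigma v -> u <> v -> rips_adj mul one inv P S n u v :=
  simplex.2.2.2.
Let avoid_b1 := fun z : Vx => z <> inr (lam, A).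

Lemma sigma_coset v : sigma v -> exists mu C, v = inr (mu, C).
Proof. by case: v => [x /no_group_vertex|[mu C] _] //; exists mu, C. Qed.

Let avoid_group x : avoid_b1 (inl x). Proof. by []. Qed.

Lemma reach_in_clique u v : sigma u -> sigma v -> avoid_b1 u -> avoid_b1 v ->
  reach_in adj avoid_b1 u v (n + 2).
Proof.
move=> hu hv nu nv; case: (classic (u = v)) => [<-|nuv]; first exact: reach_in_refl.
have [_ [_ [_ [x [y [hx [hy hxy]]]]]]] := sigma_adj hu hv nuv.
have [mu [C eu]] := sigma_coset hu; have [nu' [D ev]] := sigma_coset hv; subst u v.
have r := reach_in_trans (reach_in_cone_out (sigma_vertex hu) hx (@avoid_group x) nu)
  (reach_in_trans (reach_in_sdist (@avoid_group) hxy).1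
    (reach_in_cone_in (sigma_vertex hv) hy (@avoid_group y) nv)).
by apply: reach_in_mono r; rewrite add1n addn1 addn2.
Qed.

(* [a -> b -> b2 -> v -> c1 -> p1] has length at most [n + 1 + (n + 2) + 1 + n]. *)
Lemma coset_far_anchored a b b2 v : A a -> sigma b2 -> avoid_b1 b2 -> carrier b2 b ->
  Sdist_le mul one inv S n a b -> sigma v -> avoid_b1 v ->
  exists c, carrier v c /\ List.In (mul (inv a) c) core.
Proof.
move=> ha hb2 nb2 hb hab hv nv.
have [_ [_ [_ [p1 [c1 [hp1 [hc1 hpc]]]]]]] := sigma_adj sigma_b1 hv (nesym nv).
have [mu [B eb2]] := sigma_coset hb2; have [nu [C ev]] := sigma_coset hv; subst b2 v.
have r : reach_in adj avoid_b1 (inl a) (inl p1) (3 * n + 4).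
  have r := reach_in_trans (reach_in_sdist (@avoid_group) hab).1
    (reach_in_trans (reach_in_cone_in (sigma_vertex hb2) hb (@avoid_group b) nb2)
    (reach_in_trans (reach_in_clique hb2 hv nb2 nv)
    (reach_in_trans (reach_in_cone_out (sigma_vertex hv) hc1 (@avoid_group c1) nv)
      (reach_in_sdist (@avoid_group) hpc).2))).
  by apply: reach_in_mono r; lia.
have hp := coset_return_point circuitsP (sigma_vertex sigma_b1) ha hp1 r.
have [u [hu ec1]] := sdist_ball hpc.
by exists c1; split => //; rewrite ec1 mulA; apply: core_mul.
Qed.

Lemma coset_simplex_anchored : exists g, anchored g sigma.
Proof.
have [a [ha far]] : exists a, A a /\ forall v, sigma v -> avoid_b1 v ->
    exists c, carrier v c /\ List.In (mul (inv a) c) core.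
  case: (classic (exists b2, sigma b2 /\ avoid_b1 b2)) => [[b2 [hb2 nb2]]|single].
    have [_ [_ [_ [a [b [ha [hb hab]]]]]]] := sigma_adj sigma_b1 hb2 (nesym nb2).
    by exists a; split => // v; apply: coset_far_anchored ha hb2 nb2 hb hab.
  have [h eh] := sigma_vertex sigma_b1.
  exists h; split; first by rewrite eh; apply: lcoset_self.
  by move=> v hv nv; case: single; exists v.
exists a => v hv; case: (classic (v = inr (lam, A))) => [->|/far]; last exact.
by exists a; split => //; rewrite mulVg; apply: core_one.
Qed.

End CosetSimplex.

Lemma simplex_anchored sigma : is_simplex mul one inv P S n sigma -> exists g, anchored g sigma.
Proof.
move=> hs; case: (classic (exists a, sigma (inl a))) => [[a ha]|nog].
  by exists a; apply: group_simplex_anchored.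
have [[x|[lam A]] hb1] := hs.2.1; first by case: nog; exists x.
by apply: (coset_simplex_anchored hs _ hb1) => x hx; apply: nog; exists x.
Qed.

Definition candidates : seq Vx :=
  (List.map inl core ++ List.flat_map (fun nu =>
     List.map (fun x => inr (nu, lcoset mul inv x (P nu))) core) (enum Lam))%list.

Lemma anchored_candidates g sigma : (forall v, sigma v -> vertex v) -> anchored g sigma ->
  forall w, sigma (act g w) -> List.In w candidates.
Proof.
move=> hvert hg w hw; rewrite -(actK g w).
have [c [cc hc]] := hg _ hw.
move: (act g w) (hvert _ hw) cc hc => [h|[nu A]] vw cc hc.
  by rewrite /= -cc; apply/List.in_or_app; left; apply: List.in_map.
rewrite (coset_vertexE vw cc) act_lcoset; apply/List.in_or_app; right.
apply/List.in_flat_map; exists nu; split; first exact: In_enum.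
exact: (List.in_map (fun x => inr (nu, lcoset mul inv x (P nu)))).
Qed.

End Simplices.

End ConedGraph.

End Group.

Theorem corollary2p4 (G : Type) (mul : G -> G -> G) (one : G) (inv : G -> G)
  (HG : is_group mul one inv)
  (Lam : finType) (P : Lam -> G -> Prop)
  (HP : forall lam, is_subgroup mul one inv (P lam))
  (S : seq G) (HS : generates mul one inv S)
  (Hrh : rel_hyperbolic mul inv P S)
  (n : nat) (Hn : (1 <= n)%N) :
  exists F : seq (@Vertex G Lam -> Prop),
    forall sigma, is_simplex mul one inv P S n sigma ->
      exists g tau, List.In tau F /\
        forall v, sigma v <-> act_set mul inv g tau v.
Proof.
have [circuits circuitsP] := fine_base_circuits HG HP Hrh.1 (3 * n + 4).+2.
exists (List.map (fun l v => List.In v l) (sublists (candidates mul one inv P S n circuits))).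
move=> sigma hs.
have [g hg] := simplex_anchored HG HP circuitsP hs.
have [l [hl hi]] := sublists_represent (anchored_candidates HG HP hs.2.2.1 hg).
exists g, (fun v => List.In v l); split; first exact: (List.in_map (fun l v => List.In v l)).
move=> v; split => [sv | [w [/hi hw ->]] //].
by exists (act mul inv (inv g) v); rewrite (actKV HG); split => //; apply/hi; rewrite (actKV HG).
Qed.
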